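(* Let $S$ and $T$ be left inverse semi-braces, $\sigma:T\to\mathrm{Aut}(S)$ a homomorphism from $(T,\cdot)$ into the automorphism group of the left inverse semi-brace $S$ (write ${}^ua=\sigma(u)(a)$), and $\delta:S\to\mathrm{End}(T)$ an anti-homomorphism from $(S,+)$ into the endomorphism semigroup of $(T,+)$ (write $u^a=\delta(a)(u)$). Suppose that $$(uv)^{\lambda_a({}^ub)}+u\left((u^{-1})^b+w\right)=u\left(v^b+w\right)$$ for all $a,b\in S$ and $u,v,w\in T$. Then $S\times T$ with $$(a,u)+(b,v)=(a+b,\,u^b+v),\qquad (a,u)(b,v)=(a\,{}^ub,\,uv)$$ for all $(a,u),(b,v)\in S\times T$ is a left inverse semi-brace (the double semidirect product of $S$ and $T$ via $\sigma$ and $\delta$).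
   Context: An inverse semigroup is a semigroup $(S,\cdot)$ in which for each $a$ there is a unique $a^{-1}$ with $aa^{-1}a=a$, $a^{-1}aa^{-1}=a^{-1}$. A left inverse semi-brace is a triple $(S,+,\cdot)$ with $(S,+)$ a semigroup, $(S,\cdot)$ an inverse semigroup and $a(b+c)=ab+a(a^{-1}+c)$ for all $a,b,c$; set $\lambda_a(b)=a(a^{-1}+b)$. An automorphism of the left inverse semi-brace $S$ is a bijection preserving both operations. That $\delta$ is an anti-homomorphism from $(S,+)$ means $\delta(a+b)=\delta(b)\circ\delta(a)$, i.e. $u^{a+b}=(u^a)^b$. *)

Definition associative {S : Type} (op : S -> S -> S) : Prop :=
  forall a b c, op a (op b c) = op (op a b) c.

Definition is_inverse {S : Type} (mul : S -> S -> S) (a b : S) : Prop :=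
  mul (mul a b) a = a /\ mul (mul b a) b = b.

Definition inverse_semigroup {S : Type} (mul : S -> S -> S) : Prop :=
  associative mul /\
  forall a, exists b, is_inverse mul a b /\ forall b', is_inverse mul a b' -> b' = b.

Definition left_inverse_semi_brace {S : Type} (add mul : S -> S -> S) : Prop :=
  associative add /\ inverse_semigroup mul /\
  forall a a' b c, is_inverse mul a a' ->
    mul a (add b c) = add (mul a b) (mul a (add a' c)).

Definition bijective {A B : Type} (f : A -> B) : Prop :=
  (forall x y, f x = f y -> x = y) /\ (forall y, exists x, f x = y).

Definition semi_brace_automorphism {S : Type} (add mul : S -> S -> S) (f : S -> S) : Prop :=
  bijective f /\
  (forall a b, f (add a b) = add (f a) (f b)) /\
  (forall a b, f (mul a b) = mul (f a) (f b)).

Definition add_endomorphism {T : Type} (add : T -> T -> T) (f : T -> T) : Prop :=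
  forall u v, f (add u v) = add (f u) (f v).

Definition lambda {S : Type} (add mul : S -> S -> S) (inv : S -> S) (a b : S) : S :=
  mul a (add (inv a) b).

Definition dsp_add {S T : Type} (addS : S -> S -> S) (addT : T -> T -> T)
  (delta : S -> T -> T) (x y : S * T) : S * T :=
  (addS (fst x) (fst y), addT (delta (fst y) (snd x)) (snd y)).

Definition dsp_mul {S T : Type} (mulS : S -> S -> S) (mulT : T -> T -> T)
  (sigma : T -> S -> S) (x y : S * T) : S * T :=
  (mulS (fst x) (sigma (snd x) (fst y)), mulT (snd x) (snd y)).

(* The additive and multiplicative structures of S x T are the usual semidirect
   products, so associativity is routine.  Since sigma is an action by
   automorphisms and idempotents of T act trivially, the inverse of (a, u) is
   forced to be (^{u^-1} a^-1, u^-1).  With this inverse, the first coordinate of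
   the brace identity is the brace identity of S transported along sigma u, and
   the second coordinate is exactly the compatibility hypothesis. *)


Section InverseSemigroup.

Context {S : Type} {mul : S -> S -> S} {inv : S -> S}.

Lemma inverse_eq :
  inverse_semigroup mul -> (forall a, is_inverse mul a (inv a)) ->
  forall a b, is_inverse mul a b -> b = inv a.
Proof.
  intros [_ Huniq] Hinv a b Hab.
  destruct (Huniq a) as [b0 [_ Hb0]].
  rewrite (Hb0 b Hab), (Hb0 _ (Hinv a)). reflexivity.
Qed.

Lemma is_inverse_sym a b : is_inverse mul a b -> is_inverse mul b a.
Proof. intros [Haba Hbab]. split; assumption. Qed.

Lemma mul_inverse_idem :
  associative mul -> forall a b, is_inverse mul a b ->
  mul (mul a b) (mul a b) = mul a b.
Proof.
  intros Hassoc a b [Haba _]. rewrite Hassoc, Haba. reflexivity.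
Qed.

End InverseSemigroup.

Section ActionByInjections.

Context {S T : Type} {mulT : T -> T -> T} {invT : T -> T} {act : T -> S -> S}.
Hypothesis act_inj : forall u a b, act u a = act u b -> a = b.
Hypothesis act_mul : forall u v a, act (mulT u v) a = act u (act v a).

Lemma act_idem e a : mulT e e = e -> act e a = a.
Proof.
  intros He. apply (act_inj e). rewrite <- act_mul, He. reflexivity.
Qed.

Hypothesis mulT_assoc : associative mulT.
Hypothesis invT_inverse : forall u, is_inverse mulT u (invT u).

Lemma act_invK u a : act u (act (invT u) a) = a.
Proof.
  rewrite <- act_mul. apply act_idem, mul_inverse_idem, invT_inverse.
  exact mulT_assoc.
Qed.

Lemma act_Kinv u a : act (invT u) (act u a) = a.
Proof.
  rewrite <- act_mul. apply act_idem, mul_inverse_idem; [exact mulT_assoc|].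
  apply is_inverse_sym, invT_inverse.
Qed.

End ActionByInjections.

Section DoubleSemidirectProduct.

Context {S T : Type}.
Context {addS mulS : S -> S -> S} {invS : S -> S}.
Context {addT mulT : T -> T -> T} {invT : T -> T}.
Context {sigma : T -> S -> S} {delta : S -> T -> T}.

Hypothesis delta_add : forall a, add_endomorphism addT (delta a).
Hypothesis delta_addS : forall a b u, delta (addS a b) u = delta b (delta a u).

Lemma dsp_add_assoc :
  associative addS -> associative addT -> associative (dsp_add addS addT delta).
Proof.
  intros HaS HaT [a u] [b v] [c w]. unfold dsp_add; simpl.
  rewrite delta_addS, delta_add, HaS, HaT. reflexivity.
Qed.

Hypothesis sigma_mulT : forall u v a, sigma (mulT u v) a = sigma u (sigma v a).
Hypothesis sigma_mulS : forall u a b, sigma u (mulS a b) = mulS (sigma u a) (sigma u b).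

Lemma dsp_mul_assoc :
  associative mulS -> associative mulT -> associative (dsp_mul mulS mulT sigma).
Proof.
  intros HmS HmT [a u] [b v] [c w]. unfold dsp_mul; simpl.
  rewrite sigma_mulT, sigma_mulS, HmS, HmT. reflexivity.
Qed.

Definition dsp_inv (x : S * T) : S * T :=
  (sigma (invT (snd x)) (invS (fst x)), invT (snd x)).

Hypothesis sigma_inj : forall u a b, sigma u a = sigma u b -> a = b.
Hypothesis mulS_inverse_semigroup : inverse_semigroup mulS.
Hypothesis mulT_inverse_semigroup : inverse_semigroup mulT.
Hypothesis invS_inverse : forall a, is_inverse mulS a (invS a).
Hypothesis invT_inverse : forall u, is_inverse mulT u (invT u).

Let mulT_assoc : associative mulT := proj1 mulT_inverse_semigroup.
Let sigma_invK := act_invK sigma_inj sigma_mulT mulT_assoc invT_inverse.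
Let sigma_Kinv := act_Kinv sigma_inj sigma_mulT mulT_assoc invT_inverse.

Lemma dsp_inv_inverse x : is_inverse (dsp_mul mulS mulT sigma) x (dsp_inv x).
Proof.
  destruct x as [a u]. unfold is_inverse, dsp_inv, dsp_mul; simpl.
  destruct (invS_inverse a) as [A1 A2]. destruct (invT_inverse u) as [U1 U2].
  split.
  - rewrite sigma_invK, sigma_mulT, sigma_invK, A1, U1. reflexivity.
  - rewrite sigma_mulT, sigma_Kinv, <- !sigma_mulS, A2, U2. reflexivity.
Qed.

Lemma dsp_inverse_eq {x y} :
  is_inverse (dsp_mul mulS mulT sigma) x y -> y = dsp_inv x.
Proof.
  destruct x as [a u], y as [b w]. unfold is_inverse, dsp_inv, dsp_mul; simpl.
  intros [H1 H2]. injection H1 as H1S H1T. injection H2 as H2S H2T.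
  assert (Hw : w = invT u).
  { apply (inverse_eq mulT_inverse_semigroup); [exact invT_inverse|].
    split; assumption. }
  subst w.
  rewrite sigma_mulT, sigma_invK in H1S.
  rewrite sigma_mulT, sigma_Kinv in H2S.
  assert (Hb : sigma u b = invS a).
  { apply (inverse_eq mulS_inverse_semigroup); [exact invS_inverse|]. split.
    - exact H1S.
    - apply (f_equal (sigma u)) in H2S.
      rewrite !sigma_mulS, sigma_invK in H2S. exact H2S. }
  rewrite <- Hb, sigma_Kinv. reflexivity.
Qed.

Lemma dsp_inverse_semigroup : inverse_semigroup (dsp_mul mulS mulT sigma).
Proof.
  split.
  - exact (dsp_mul_assoc (proj1 mulS_inverse_semigroup) mulT_assoc).
  - intros x. exists (dsp_inv x). split.
    + apply dsp_inv_inverse.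
    + intros y. apply dsp_inverse_eq.
Qed.

Hypothesis sigma_addS : forall u a b, sigma u (addS a b) = addS (sigma u a) (sigma u b).

Lemma dsp_brace_identity :
  left_inverse_semi_brace addS mulS ->
  (forall (a b : S) (u v w : T),
     addT (delta (lambda addS mulS invS a (sigma u b)) (mulT u v))
          (mulT u (addT (delta b (invT u)) w))
     = mulT u (addT (delta b v) w)) ->
  forall x x' y z, is_inverse (dsp_mul mulS mulT sigma) x x' ->
    dsp_mul mulS mulT sigma x (dsp_add addS addT delta y z)
    = dsp_add addS addT delta (dsp_mul mulS mulT sigma x y)
        (dsp_mul mulS mulT sigma x (dsp_add addS addT delta x' z)).
Proof.
  intros [_ [_ braceS]] Hcomp x x' [b v] [c w] Hx'.
  rewrite (dsp_inverse_eq Hx'). destruct x as [a u].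
  unfold dsp_inv, dsp_mul, dsp_add; simpl.
  rewrite !sigma_addS, sigma_invK. f_equal.
  - apply braceS, invS_inverse.
  - symmetry. apply Hcomp.
Qed.

End DoubleSemidirectProduct.

Theorem theorem38 (S T : Type)
  (addS mulS : S -> S -> S) (invS : S -> S)
  (addT mulT : T -> T -> T) (invT : T -> T)
  (sigma : T -> S -> S) (delta : S -> T -> T)
  (HS : left_inverse_semi_brace addS mulS)
  (HT : left_inverse_semi_brace addT mulT)
  (HinvS : forall a, is_inverse mulS a (invS a))
  (HinvT : forall u, is_inverse mulT u (invT u))
  (Hsigma_aut : forall u, semi_brace_automorphism addS mulS (sigma u))
  (Hsigma_hom : forall u v a, sigma (mulT u v) a = sigma u (sigma v a))
  (Hdelta_end : forall a, add_endomorphism addT (delta a))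
  (Hdelta_anti : forall a b u, delta (addS a b) u = delta b (delta a u))
  (Hcomp : forall (a b : S) (u v w : T),
     addT (delta (lambda addS mulS invS a (sigma u b)) (mulT u v))
          (mulT u (addT (delta b (invT u)) w))
     = mulT u (addT (delta b v) w)) :
  left_inverse_semi_brace (dsp_add addS addT delta) (dsp_mul mulS mulT sigma).
Proof.
  assert (sigma_inj : forall u a b, sigma u a = sigma u b -> a = b)
    by (intros u; apply (Hsigma_aut u)).
  assert (sigma_addS : forall u a b, sigma u (addS a b) = addS (sigma u a) (sigma u b))
    by (intros u; apply (Hsigma_aut u)).
  assert (sigma_mulS : forall u a b, sigma u (mulS a b) = mulS (sigma u a) (sigma u b))
    by (intros u; apply (Hsigma_aut u)).
  pose proof HS as (addS_assoc & mulS_inv & _).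
  destruct HT as (addT_assoc & mulT_inv & _).
  split; [| split].
  - apply dsp_add_assoc; assumption.
  - apply (dsp_inverse_semigroup (invS := invS) (invT := invT)); assumption.
  - apply (dsp_brace_identity (invS := invS) (invT := invT)); assumption.
Qed.
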